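(* Let $S\subseteq\mathbb{R}^d$ be a finite set, let $p,q\in S$ and let $i\in[d]$ with $p_i\ne q_i$. Let $a_1,\dots,a_\ell>0$ be the lengths, listed in order from $p_i$ to $q_i$, of the consecutive intervals into which the segment between $p_i$ and $q_i$ is partitioned by the projections $\{x_i:x\in S\}$ lying in it. Define $$s_i=\frac{(\sum_{j=1}^\ell a_j)^2}{\sum_{j=1}^\ell a_j^2},\qquad \mathrm{sep}_i=\frac{\sum_{j=1}^\ell a_j^2\min(j,\ell+1-j)}{\sum_{j=1}^\ell a_j^2}.$$ Then $\mathrm{sep}_i\ge\dfrac{s_i}{8\big(1+\ln(2|S|/s_i)\big)}$. *)

From HB Require Import structures.
From mathcomp Require Import all_boot all_order all_algebra.
From mathcomp Require Import all_classical all_reals all_analysis.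
Set Implicit Arguments. Unset Strict Implicit. Unset Printing Implicit Defensive.
Import Order.TTheory GRing.Theory Num.Theory.
Local Open Scope ring_scope.

Definition proj_breaks (R : realType) (d : nat) (S : seq 'rV[R]_d) (i : 'I_d)
    (a b : R) : seq R :=
  let lo := Num.min a b in let hi := Num.max a b in
  sort <=%R (undup [seq (x : 'rV[R]_d) ord0 i | x <- S & ((lo <= (x : 'rV[R]_d) ord0 i) && ((x : 'rV[R]_d) ord0 i <= hi))]).

Definition gaps (R : realType) (s : seq R) : seq R :=
  [seq nth 0 s j.+1 - nth 0 s j | j <- iota 0 (size s).-1].

Definition seg_lengths (R : realType) (d : nat) (S : seq 'rV[R]_d) (p q : 'rV[R]_d)
    (i : 'I_d) : seq R :=
  gaps (proj_breaks S i (p ord0 i) (q ord0 i)).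

Definition s_ratio (R : realType) (a : seq R) : R :=
  (\sum_(x <- a) x) ^+ 2 / \sum_(x <- a) x ^+ 2.

(* sep_i = sum_{j=1}^l a_j^2 min(j, l+1-j) / sum a_j^2 ; here j is 0-based,
   so the weight of index j is min(j+1, l-j). *)
Definition sep_ratio (R : realType) (a : seq R) : R :=
  (\sum_(j < size a) (nth 0 a j) ^+ 2 * (minn j.+1 (size a - j))%:R)
    / \sum_(x <- a) x ^+ 2.

From HB Require Import structures.
From mathcomp Require Import all_boot all_order all_algebra.
From mathcomp Require Import all_classical all_reals all_analysis.
From mathcomp Require Import ring lra zify.

(* Write A = sum a_j, B = sum a_j^2 and X = sum a_j^2 w_j, where w_j = min(j, l+1-j),
   so that s = A^2/B and sep = X/B; since w_j >= 1, B <= X, which settles s < 8.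
   Otherwise let T = floor(s/8) and split the gaps into the "near" ones (w_j <= T) and
   the "far" ones.  Every value of w_j is taken at most twice, so there are at most 2T
   near gaps and, by Cauchy-Schwarz, the square of their total length is at most
   2TB <= A^2/4; Cauchy-Schwarz with weights w_j bounds the square of the far total by
   X * sum_{T < k <= l/2} 2/k <= 2X ln(|S|/(2T)).  With r = 8T/s in [1/2, 1], the two
   estimates combine into the claim because ln(2/r) <= 2 - r, which rests on
   ln 2 <= 3/4. *)

Set Implicit Arguments. Unset Strict Implicit. Unset Printing Implicit Defensive.
Import Order.TTheory GRing.Theory Num.Theory.
Local Open Scope ring_scope.

Lemma sumr_pred_le (R : numDomainType) (I : finType) (P : pred I) (F : I -> R) :
  (forall i, 0 <= F i) -> \sum_(i | P i) F i <= \sum_i F i.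
Proof. by move=> F_ge0; rewrite [leRHS](bigID P) /= lerDl sumr_ge0. Qed.

Lemma sumr_gt0 (R : numDomainType) (I : finType) (i0 : I) (F : I -> R) :
  (forall i, 0 < F i) -> 0 < \sum_i F i.
Proof.
by move=> F_gt0; rewrite (bigD1 i0) //= ltr_pwDl // sumr_ge0 // => i _; apply: ltW.
Qed.

Lemma sqr_sum_le_weighted (R : realFieldType) (I : finType) (P : pred I) (u c : I -> R) :
  (forall i, P i -> 0 < c i) ->
  (\sum_(i | P i) u i) ^+ 2 <=
    (\sum_(i | P i) u i ^+ 2 * c i) * \sum_(i | P i) (c i)^-1.
Proof.
move=> c_gt0; set A := \sum_(i | P i) u i; set W := \sum_(i | P i) u i ^+ 2 * c i.
set Q := \sum_(i | P i) (c i)^-1.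
have cV_ge0 i : P i -> 0 <= (c i)^-1 by move/c_gt0; rewrite invr_ge0 => /ltW.
have [Q0 | Q_neq0] := eqVneq Q 0.
  have P0 i : P i = false.
    apply/negP => Pi; have := psumr_eq0P cV_ge0 Q0 Pi.
    by move/eqP; rewrite invr_eq0 gt_eqF ?c_gt0.
  by rewrite /A /Q !big_pred0 // expr0n mulr0.
have Q_gt0 : 0 < Q by rewrite lt_def Q_neq0 sumr_ge0.
have quad t : 0 <= W - 2 * t * A + t ^+ 2 * Q.
  have -> : W - 2 * t * A + t ^+ 2 * Q = \sum_(i | P i) c i * (u i - t / c i) ^+ 2.
    rewrite (eq_bigr (fun i => u i ^+ 2 * c i - 2 * t * u i + t ^+ 2 * (c i)^-1)).
      by rewrite big_split sumrB /= -!mulr_sumr.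
    by move=> i /c_gt0 ci; field; rewrite gt_eqF.
  by apply: sumr_ge0 => i /c_gt0 ci; rewrite mulr_ge0 ?sqr_ge0 ?ltW.
have := quad (A / Q).
have -> : W - 2 * (A / Q) * A + (A / Q) ^+ 2 * Q = (W * Q - A ^+ 2) / Q.
  by field.
by rewrite pmulr_lge0 ?invr_gt0 // subr_ge0.
Qed.

Definition sep_weight (l j : nat) : nat := minn j.+1 (l - j).

Lemma sum_sep_weight_le (R : numDomainType) (l : nat) (g : nat -> R) :
  (forall k, 0 <= g k) ->
  \sum_(j < l) g (sep_weight l j) <= 2 * \sum_(1 <= k < (uphalf l).+1) g k.
Proof.
move=> g_ge0; set K := uphalf l.
pose h k := if (k <= K)%N then g k else 0.
have h_ge0 k : 0 <= h k by rewrite /h; case: ifP.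
have sum_h : \sum_(j < l) h j.+1 = \sum_(1 <= k < K.+1) g k.
  transitivity (\sum_(1 <= k < l.+1) h k); first by rewrite big_add1 big_mkord.
  rewrite (big_cat_nat _ (n := K.+1)) //=; last by rewrite /K; lia.
  rewrite [X in _ + X]big1_seq ?addr0 => [|k /andP[_]]; last first.
    by rewrite mem_index_iota /h => /andP[Kk _]; rewrite leqNgt Kk.
  by apply: eq_big_nat => k /andP[_ kK]; rewrite /h -ltnS kK.
have sum_h_rev : \sum_(j < l) h (l - j)%N = \sum_(j < l) h j.+1.
  rewrite (reindex_inj rev_ord_inj) /=; apply: eq_bigr => j _.
  by congr h; have := ltn_ord j; lia.
rewrite mulr_natl mulr2n -sum_h -{2}sum_h_rev -big_split /=.
apply: ler_sum => j _; rewrite /sep_weight.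
have wK : (minn j.+1 (l - j) <= K)%N by rewrite /K; lia.
case: (leqP j.+1 (l - j)) wK => _ wK.
- by rewrite {1}/h wK lerDl.
- by rewrite {2}/h wK lerDr.
Qed.

Lemma invDr1_le_lnB (R : realType) (x : R) : 0 < x -> (x + 1)^-1 <= ln (x + 1) - ln x.
Proof.
move=> x_gt0; have x1_gt0 : 0 < x + 1 by lra.
have x1_gt1 : 1 < x + 1 by lra.
have := @le_ln1Dx R (- (x + 1)^-1).
have -> : 1 - (x + 1)^-1 = x / (x + 1) by field; rewrite gt_eqF.
rewrite ln_div ?posrE // ltrNl opprK invf_lt1; last lra.
by move=> /(_ x1_gt1); lra.
Qed.

Lemma sum_inv_nat_le_ln (R : realType) (T K : nat) : (0 < T)%N -> (T <= K)%N ->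
  \sum_(T.+1 <= k < K.+1) (k%:R : R)^-1 <= ln K%:R - ln T%:R.
Proof.
move=> T_gt0; elim: K => [|K IH]; first by rewrite leqn0 => /eqP T0; rewrite T0 in T_gt0.
rewrite leq_eqVlt => /orP[/eqP <- | TK]; first by rewrite big_geq // subrr.
have K_gt0 : 0 < K%:R :> R by rewrite ltr0n (leq_trans T_gt0).
rewrite big_nat_recr //= (_ : ln _ - _ = ln K%:R - ln T%:R + (ln K.+1%:R - ln K%:R)).
  by apply: lerD (IH TK) _; rewrite -natr1 invDr1_le_lnB.
by ring.
Qed.

Lemma ln2_le (R : realType) : ln (2 : R) <= 3 / 4.
Proof.
have -> : (3 / 4 : R) = ln (expR (8%:R * (3 / 32))) by rewrite expRK; lra.
rewrite ler_ln ?posrE ?expR_gt0 // expRM_natl.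
apply: (@le_trans _ _ ((35 / 32) ^+ 8)); first lra.
rewrite lerXn2r ?nnegrE ?expR_ge0 //.
by have := expR_ge1Dx (3 / 32 : R); lra.
Qed.

Lemma ln_2div_le (R : realType) (r : R) : 1 / 2 <= r -> r <= 1 -> ln (2 / r) <= 2 - r.
Proof.
move=> r_ge r_le; have r_gt0 : 0 < r by lra.
have inv_gt0 : 0 < (2 * r)^-1 by rewrite invr_gt0; lra.
have inv_le : (2 * r)^-1 <= 3 / 2 - r.
  by rewrite -[_^-1]mul1r ler_pdivrMr; nra.
have -> : 2 / r = 2 * (2 * (1 + ((2 * r)^-1 - 1))) by field; lra.
rewrite !lnM ?posrE; try lra.
have := ln2_le R; have := @le_ln1Dx R ((2 * r)^-1 - 1); lra.
Qed.

Lemma card_sep_weight_le (R : numDomainType) (l T : nat) : (T <= uphalf l)%N ->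
  \sum_(j < l | (sep_weight l j <= T)%N) (1 : R) <= 2 * T%:R.
Proof.
move=> TK; rewrite big_mkcond /=.
apply: le_trans (@sum_sep_weight_le R l (fun k => if (k <= T)%N then 1 else 0) _) _.
  by move=> k; case: ifP.
rewrite ler_pM2l // (big_cat_nat _ (n := T.+1)) //= [X in _ + X]big1_seq ?addr0.
  rewrite (eq_big_nat _ _ (F2 := fun => 1)) ?sumr_const_nat ?subn1 //.
  by move=> k /andP[_]; rewrite ltnS => ->.
by move=> k /andP[_]; rewrite mem_index_iota => /andP[Tk _]; rewrite leqNgt Tk.
Qed.

Lemma sum_inv_sep_weight_le (R : realType) (l T : nat) : (0 < T)%N -> (T <= uphalf l)%N ->
  \sum_(j < l | (T < sep_weight l j)%N) ((sep_weight l j)%:R : R)^-1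
    <= 2 * (ln (uphalf l)%:R - ln T%:R).
Proof.
move=> T_gt0 TK; rewrite big_mkcond /=.
apply: le_trans (@sum_sep_weight_le R l (fun k => if (T < k)%N then (k%:R)^-1 else 0) _) _.
  by move=> k; case: ifP; rewrite ?invr_ge0.
rewrite ler_pM2l // (big_cat_nat _ (n := T.+1)) //= big1_seq ?add0r.
  rewrite (eq_big_nat _ _ (F2 := fun k => (k%:R)^-1)) ?sum_inv_nat_le_ln //.
  by move=> k /andP[Tk _]; rewrite Tk.
by move=> k /andP[_]; rewrite mem_index_iota ltnS => /andP[_ kT]; rewrite ltnNge kT.
Qed.

Lemma balance_le (R : realFieldType) (a d x L r : R) :
  0 <= L -> 0 <= x -> r <= 1 ->
  a <= r / 2 * a + 4 * d * x -> d <= L + (2 - r) -> a <= 8 * (1 + L) * x.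
Proof.
move=> L_ge0 x_ge0 r_le a_le d_le.
have r2_gt0 : 0 < 1 - r / 2 by lra.
rewrite -(ler_pM2l r2_gt0).
have := ler_wpM2r x_ge0 d_le; have : 0 <= L * (1 - r) * x by rewrite !mulr_ge0 ?subr_ge0.
lra.
Qed.

Lemma near_far_balance (R : realType) (s B X T K N : R) :
  0 < s -> 0 <= X -> 0 < K -> 2 * K <= N -> s / 16 <= T -> T <= s / 8 ->
  0 <= ln (2 * N / s) ->
  s * B <= 4 * T * B + 4 * (ln K - ln T) * X -> s * B <= 8 * (1 + ln (2 * N / s)) * X.
Proof.
move=> s_gt0 X_ge0 K_gt0 KN T_ge T_le L_ge0 sB_le.
set L := ln (2 * N / s) in L_ge0 *; set r := 8 * T / s.
have T_gt0 : 0 < T by lra.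
have r_ge : 1 / 2 <= r by rewrite /r ler_pdivlMr //; lra.
have r_le : r <= 1 by rewrite /r ler_pdivrMr //; lra.
have r_gt0 : 0 < r by lra.
have nearE : 4 * T * B = r / 2 * (s * B) by rewrite /r; field; rewrite gt_eqF.
have far_le : ln K - ln T <= L + (2 - r).
  apply: le_trans (_ : _ <= L + ln (2 / r)) _; last by rewrite lerD2l ln_2div_le.
  have N_gt0 : 0 < N by lra.
  have Ns_gt0 : 0 < 2 * N / s by rewrite !mulr_gt0 ?invr_gt0.
  have r2_gt0 : 0 < 2 / r by rewrite divr_gt0.
  rewrite -ln_div ?posrE // -[L + _](lnM (x := 2 * N / s) (y := 2 / r)) ?posrE //.
  rewrite ler_ln ?posrE ?mulr_gt0 ?invr_gt0 //.
  rewrite (_ : 2 * N / s * (2 / r) = N / 2 / T); last by rewrite /r; field; lra.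
  by rewrite ler_pM2r ?invr_gt0; lra.
by apply: (balance_le L_ge0 X_ge0 r_le _ far_le); rewrite -nearE.
Qed.

Section SepWeightedSum.

Variables (R : realType) (l : nat) (f : 'I_l -> R).
Hypothesis f_gt0 : forall j, 0 < f j.

Local Notation A := (\sum_(j < l) f j).
Local Notation B := (\sum_(j < l) f j ^+ 2).
Local Notation X := (\sum_(j < l) f j ^+ 2 * (sep_weight l j)%:R).

Lemma sqr_sum_le_size : A ^+ 2 <= l%:R * B.
Proof.
have := @sqr_sum_le_weighted _ _ xpredT f (fun _ => 1) (fun _ _ => ltr01).
by rewrite invr1 sumr_const card_ord (eq_bigr _ (fun j _ => mulr1 _)) mulr_natr -mulr_natl.
Qed.

Lemma sum_sqr_le_sep : B <= X.
Proof.
apply: ler_sum => j _; rewrite ler_peMr ?sqr_ge0 // ler1n /sep_weight.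
by have := ltn_ord j; lia.
Qed.

Lemma near_far_sqr_sum_le (T : nat) : (0 < T)%N -> (T <= uphalf l)%N ->
  A ^+ 2 <= 4 * T%:R * B + 4 * (ln (uphalf l)%:R - ln T%:R) * X.
Proof.
move=> T_gt0 TK; have f2_ge0 j : 0 <= f j ^+ 2 by apply: sqr_ge0.
set AN := \sum_(j < l | (sep_weight l j <= T)%N) f j.
set AF := \sum_(j < l | ~~ (sep_weight l j <= T)%N) f j.
have near : AN ^+ 2 <= 2 * T%:R * B.
  apply: le_trans (@sqr_sum_le_weighted _ _ _ f (fun _ => 1) (fun _ _ => ltr01)) _.
  rewrite (eq_bigr _ (fun j _ => mulr1 (f j ^+ 2))) invr1 mulrC.
  by rewrite ler_pM ?sumr_ge0 ?card_sep_weight_le ?sumr_pred_le.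
have far : AF ^+ 2 <= 2 * (ln (uphalf l)%:R - ln T%:R) * X.
  apply: le_trans (@sqr_sum_le_weighted _ _ _ f (fun j => (sep_weight l j)%:R) _) _.
    by move=> j; rewrite -ltnNge ltr0n => /(leq_ltn_trans (leq0n T)).
  have fw_ge0 j : 0 <= f j ^+ 2 * (sep_weight l j)%:R by rewrite mulr_ge0.
  rewrite mulrC ler_pM ?sumr_ge0 ?sumr_pred_le //.
  rewrite (eq_bigl (fun j : 'I_l => T < sep_weight l j)%N) => [|j]; last by rewrite ltnNge.
  exact: sum_inv_sep_weight_le.
have -> : A = AN + AF by rewrite (bigID (fun j : 'I_l => (sep_weight l j <= T)%N)).
have := sqr_ge0 (AN - AF); rewrite sqrrB sqrrD; lra.
Qed.

Lemma sqr_sum_ratio_le_sep (n : nat) : (0 < l)%N -> (l < n)%N ->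
  A ^+ 2 / B / (8 * (1 + ln (2 * n%:R / (A ^+ 2 / B)))) <= X / B.
Proof.
move=> l_gt0 l_lt_n; pose j0 := Ordinal l_gt0.
have A_gt0 : 0 < A by rewrite (sumr_gt0 j0).
have B_gt0 : 0 < B by rewrite (sumr_gt0 j0) // => j; rewrite exprn_gt0.
have B_le_X := sum_sqr_le_sep.
have A2_le := sqr_sum_le_size.
set s := A ^+ 2 / B; set L := ln (2 * n%:R / s).
have s_gt0 : 0 < s by rewrite divr_gt0 ?exprn_gt0.
have A2E : A ^+ 2 = s * B by rewrite /s divfK ?gt_eqF.
have s_le_l : s <= l%:R by rewrite /s ler_pdivrMr.
have l_lt_n' : l%:R + 1 <= n%:R :> R by rewrite natr1 ler_nat.
have L_ge0 : 0 <= L by rewrite ln_ge0 // ler_pdivlMr // mul1r; lra.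
suff A2_le_X : A ^+ 2 <= 8 * (1 + L) * X.
  rewrite ler_pdivrMr; last lra.
  by rewrite mulrAC ler_pM2r ?invr_gt0 // mulrC.
have [s_lt8 | s_ge8] := ltP s 8.
  by rewrite A2E; nra.
have /andP[T_le T_gt] := @truncn_itv _ (s / 8) (divr_ge0 (ltW s_gt0) (ler0n _ 8)).
set T := Num.truncn (s / 8) in T_le T_gt.
have T_gt0 : (0 < T)%N by rewrite -ltnS -(ltr_nat R); lra.
have T_le_K : (T <= uphalf l)%N.
  have : (8 * T)%:R <= l%:R :> R by rewrite natrM; lra.
  by rewrite ler_nat; lia.
have K_gt0 : 0 < (uphalf l)%:R :> R by rewrite ltr0n (leq_trans T_gt0).
have K_le_n : 2 * (uphalf l)%:R <= n%:R :> R by rewrite -natrM ler_nat; lia.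
have T_ge1 : 1 <= T%:R :> R by rewrite ler1n.
have T_ge : s / 16 <= T%:R by lra.
rewrite A2E; apply: (near_far_balance s_gt0 _ K_gt0 K_le_n T_ge T_le L_ge0); first lra.
by rewrite -A2E; apply: near_far_sqr_sum_le.
Qed.

End SepWeightedSum.

Lemma sep_ratio_ge (R : realType) (n : nat) (a : seq R) :
  (0 < size a < n)%N -> (forall x, x \in a -> 0 < x) ->
  s_ratio a / (8 * (1 + ln (2 * n%:R / s_ratio a))) <= sep_ratio a.
Proof.
move=> /andP[a_gt0 a_lt_n] a_pos.
have f_gt0 (j : 'I_(size a)) : 0 < a`_j by apply/a_pos/mem_nth.
have sumE (F : R -> R) : \sum_(x <- a) F x = \sum_(j < size a) F a`_j.
  by rewrite (big_nth 0) big_mkord.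
by rewrite /s_ratio /sep_ratio !sumE; apply: sqr_sum_ratio_le_sep.
Qed.

Lemma gaps_gt0 (R : realType) (s : seq R) : sorted <%R s -> forall x, x \in gaps s -> 0 < x.
Proof.
move=> s_sorted x /mapP[j]; rewrite mem_iota add0n => j_lt ->.
rewrite subr_gt0; apply: (sorted_ltn_nth lt_trans 0 s_sorted); rewrite ?inE //.
all: by move: j_lt; case: (size s) => // m; lia.
Qed.

Lemma size_gaps (R : realType) (s : seq R) : size (gaps s) = (size s).-1.
Proof. by rewrite size_map size_iota. Qed.

Section ProjBreaks.

Variables (R : realType) (d : nat) (S : seq 'rV[R]_d) (i : 'I_d) (a b : R).

Lemma proj_breaks_sorted : sorted <%R (proj_breaks S i a b).
Proof. by rewrite lt_sorted_uniq_le sort_uniq undup_uniq sort_sorted //; apply: le_total. Qed.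

Lemma mem_proj_breaks (x : 'rV[R]_d) : x \in S ->
  Num.min a b <= x ord0 i <= Num.max a b -> x ord0 i \in proj_breaks S i a b.
Proof.
by move=> xS x_in; rewrite mem_sort mem_undup; apply/mapP; exists x; rewrite // mem_filter x_in.
Qed.

Lemma size_proj_breaks : (size (proj_breaks S i a b) <= size S)%N.
Proof.
rewrite size_sort (leq_trans (size_undup _)) // size_map size_filter; exact: count_size.
Qed.

End ProjBreaks.

Theorem lemmaC1 (R : realType) (d : nat) (S : seq 'rV[R]_d) (p q : 'rV[R]_d)
    (i : 'I_d) :
  uniq S -> p \in S -> q \in S -> p ord0 i != q ord0 i ->
  let a := seg_lengths S p q i in
  s_ratio a / (8 * (1 + ln (2 * (size S)%:R / s_ratio a))) <= sep_ratio a.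
Proof.
move=> _ pS qS pq /=; set br := proj_breaks S i (p ord0 i) (q ord0 i).
have p_br : p ord0 i \in br by apply: mem_proj_breaks; rewrite // ge_min le_max !lexx.
have q_br : q ord0 i \in br by apply: mem_proj_breaks; rewrite // ge_min le_max !lexx !orbT.
have br_ge2 : (2 <= size br)%N.
  apply: (uniq_leq_size (s1 := [:: p ord0 i; q ord0 i])); first by rewrite /= inE pq.
  by move=> x; rewrite !inE => /orP[] /eqP ->.
apply: sep_ratio_ge; last exact/gaps_gt0/proj_breaks_sorted.
have br_le : (size br <= size S)%N := size_proj_breaks _ _ _ _.
by rewrite size_gaps -/br -subn1; lia.
Qed.
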